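(* Let $F:\mathbf{PolyEnd}\to\mathbf{PolyEnd}$, $\mathsf P\mapsto\overline{\mathsf P}$, be the free-monad monad. For every polynomial endofunctor $\mathsf P$, the functor $\mathbf{PolyEnd}/\mathsf P\to\mathbf{PolyEnd}/\overline{\mathsf P}$, $[\mathsf Q\to\mathsf P]\mapsto[\overline{\mathsf Q}\to\overline{\mathsf P}]$, has a left adjoint.
   Context: A polynomial endofunctor is a diagram of sets $P_0\xleftarrow{s}P_2\xrightarrow{p}P_1\xrightarrow{t}P_0$ with $p$ having finite fibres; a morphism is a triple of maps commuting with $s,p,t$ whose middle square is a pullback; these form $\mathbf{PolyEnd}$. A tree is a polynomial endofunctor with all sets finite, $t$ injective, $s$ injective with singleton complement (the root), and such that iterating $\sigma$ ($\sigma(\mathrm{root})=\mathrm{root}$, $\sigma(e)=t(p(e))$ for $e\in T_2$) brings every edge to the root. A $\mathsf P$-tree is a tree with a morphism to $\mathsf P$. The free monad on $\mathsf P$ is $\overline{\mathsf P}:\ P_0\leftarrow\mathrm{tr}'(\mathsf P)\to\mathrm{tr}(\mathsf P)\to P_0$, where $\mathrm{tr}(\mathsf P)$ is the set of isomorphism classes of $\mathsf P$-trees, $\mathrm{tr}'(\mathsf P)$ those with a marked leaf, the maps returning the decoration of the marked leaf, forgetting the mark, and returning the decoration of the root; for a morphism $\alpha:\mathsf Q\to\mathsf P$, $\overline\alpha$ composes decorations with $\alpha$. *)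

From mathcomp Require Import all_boot.
From Stdlib Require Import ClassicalEpsilon.

Set Implicit Arguments.
Unset Strict Implicit.
Unset Printing Implicit Defensive.

Record PolyEnd := PE {
  pe0 : Type; pe2 : Type; pe1 : Type;
  pes : pe2 -> pe0; pep : pe2 -> pe1; pet : pe1 -> pe0 }.

Definition finfib (P : PolyEnd) : Prop :=
  forall b : pe1 P, exists l : list (pe2 P), forall e, pep e = b -> List.In e l.

Record PMap (Q P : PolyEnd) := PM {
  f0 : pe0 Q -> pe0 P; f2 : pe2 Q -> pe2 P; f1 : pe1 Q -> pe1 P }.

(* commuting with s,p,t and middle square a pullback (of sets) *)
Definition is_mor (Q P : PolyEnd) (a : PMap Q P) : Prop :=
  (forall e, f0 a (pes e) = pes (f2 a e)) /\
  (forall e, f1 a (pep e) = pep (f2 a e)) /\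
  (forall b, f0 a (pet b) = pet (f1 a b)) /\
  (forall (b : pe1 Q) (e' : pe2 P), pep e' = f1 a b ->
     exists! e : pe2 Q, pep e = b /\ f2 a e = e').

Definition Mor (Q P : PolyEnd) := { a : PMap Q P | is_mor a }.

Definition pmap_comp (A B C : PolyEnd) (f : PMap A B) (g : PMap B C) : PMap A C :=
  PM (fun x => f0 g (f0 f x)) (fun x => f2 g (f2 f x)) (fun x => f1 g (f1 f x)).

Definition pmap_eq (A B : PolyEnd) (f g : PMap A B) : Prop :=
  (forall x, f0 f x = f0 g x) /\ (forall x, f2 f x = f2 g x) /\
  (forall x, f1 f x = f1 g x).

Lemma is_mor_comp (A B C : PolyEnd) (f : PMap A B) (g : PMap B C) :
  is_mor f -> is_mor g -> is_mor (pmap_comp f g).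
Proof.
move=> [fs [fp [ft fpb]]] [gs [gp [gt gpb]]]; split; [|split; [|split]] => /=.
- by move=> e; rewrite fs gs.
- by move=> e; rewrite fp gp.
- by move=> b; rewrite ft gt.
move=> b e' He'.
have [e1 [[He1 He1'] Hu1]] := gpb (f1 f b) e' He'.
have [e [[He He'2] Hu]] := fpb b e1 He1.
exists e; split; first by split => //; rewrite He'2.
move=> e'' [H1 H2]; apply: Hu; split => //.
symmetry; apply: Hu1; split => //; by rewrite -fp H1.
Qed.

Definition mor_comp (A B C : PolyEnd) (f : Mor A B) (g : Mor B C) : Mor A C :=
  exist _ (pmap_comp (proj1_sig f) (proj1_sig g))
          (is_mor_comp (proj2_sig f) (proj2_sig g)).

Definition tsigma (n0 n2 n1 : nat) (s : 'I_n2 -> 'I_n0) (p : 'I_n2 -> 'I_n1)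
  (t : 'I_n1 -> 'I_n0) (x : 'I_n0) : 'I_n0 :=
  match [pick e | s e == x] with Some e => t (p e) | None => x end.

Record Tree := MkTree {
  tn0 : nat; tn2 : nat; tn1 : nat;
  ts : 'I_tn2 -> 'I_tn0; tp : 'I_tn2 -> 'I_tn1; tt : 'I_tn1 -> 'I_tn0;
  troot : 'I_tn0;
  tt_inj : injective tt;
  ts_inj : injective ts;
  ts_root : forall e, ts e <> troot;
  ts_onto : forall x, x <> troot -> exists e, ts e = x;
  ttree : forall x, exists k, iter k (tsigma ts tp tt) x = troot }.

Definition tree_pe (T : Tree) : PolyEnd :=
  PE (@ts T) (@tp T) (@tt T).

Definition PTree (P : PolyEnd) := { T : Tree & Mor (tree_pe T) P }.

Definition ptree_iso_via (P : PolyEnd) (A B : PTree P)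
  (h : Mor (tree_pe (projT1 A)) (tree_pe (projT1 B))) : Prop :=
  bijective (f0 (proj1_sig h)) /\ bijective (f2 (proj1_sig h)) /\
  bijective (f1 (proj1_sig h)) /\
  pmap_eq (pmap_comp (proj1_sig h) (proj1_sig (projT2 B))) (proj1_sig (projT2 A)).

Definition ptree_iso (P : PolyEnd) (A B : PTree P) : Prop :=
  exists h, @ptree_iso_via P A B h.

(* P-trees with a marked leaf (an edge which is not the output of a node) *)
Definition MPTree (P : PolyEnd) :=
  { A : PTree P & { l : 'I_(tn0 (projT1 A)) | forall b, tt b <> l } }.

Definition mptree_iso (P : PolyEnd) (M N : MPTree P) : Prop :=
  exists h, @ptree_iso_via P (projT1 M) (projT1 N) h /\
    f0 (proj1_sig h) (proj1_sig (projT2 M)) = proj1_sig (projT2 N).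

Definition trP (P : PolyEnd) :=
  { C : PTree P -> Prop | exists A, C = ptree_iso A }.
Definition trmP (P : PolyEnd) :=
  { C : MPTree P -> Prop | exists M, C = mptree_iso M }.

Definition class_of (P : PolyEnd) (A : PTree P) : trP P :=
  exist _ (ptree_iso A) (ex_intro _ A erefl).
Definition mclass_of (P : PolyEnd) (M : MPTree P) : trmP P :=
  exist _ (mptree_iso M) (ex_intro _ M erefl).

Definition rep (P : PolyEnd) (C : trP P) : PTree P :=
  proj1_sig (constructive_indefinite_description _ (proj2_sig C)).
Definition mrep (P : PolyEnd) (C : trmP P) : MPTree P :=
  proj1_sig (constructive_indefinite_description _ (proj2_sig C)).

Definition root_dec (P : PolyEnd) (A : PTree P) : pe0 P :=
  f0 (proj1_sig (projT2 A)) (troot (projT1 A)).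
Definition leaf_dec (P : PolyEnd) (M : MPTree P) : pe0 P :=
  f0 (proj1_sig (projT2 (projT1 M))) (proj1_sig (projT2 M)).
Definition forget (P : PolyEnd) (M : MPTree P) : PTree P := projT1 M.

Definition Fbar (P : PolyEnd) : PolyEnd :=
  PE (fun C : trmP P => leaf_dec (mrep C))
     (fun C : trmP P => class_of (forget (mrep C)))
     (fun C : trP P => root_dec (rep C)).

Definition ptree_comp (Q P : PolyEnd) (A : PTree Q) (a : Mor Q P) : PTree P :=
  existT _ (projT1 A) (mor_comp (projT2 A) a).
Definition mptree_comp (Q P : PolyEnd) (M : MPTree Q) (a : Mor Q P) : MPTree P :=
  existT _ (ptree_comp (projT1 M) a) (projT2 M).

Definition Fbar_map (Q P : PolyEnd) (a : Mor Q P) : PMap (Fbar Q) (Fbar P) :=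
  @PM (Fbar Q) (Fbar P) (f0 (proj1_sig a))
     (fun C : trmP Q => mclass_of (mptree_comp (mrep C) a))
     (fun C : trP Q => class_of (ptree_comp (rep C) a)).

From mathcomp Require Import all_boot.
From Stdlib Require Import ClassicalEpsilon ProofIrrelevance FunctionalExtensionality.
From Stdlib Require Import PropExtensionality Relation_Operators Eqdep.

Set Implicit Arguments.
Unset Strict Implicit.
Unset Printing Implicit Defensive.

(* Given xi : X -> Pbar, glue together the P-trees xi(x), x in X_1, along X:
   the root of xi(x) is identified with t(x) and the leaf of xi(p e) marked by
   xi(e) with s(e).  The result L carries the decoration lam : L -> P induced
   by the trees, and each x becomes an L-tree, giving eta : X -> Lbar.  P-trees
   are rigid: an isomorphism of P-trees is unique, since it is determined at
   the root and then, edge by edge going up, by injectivity of t and the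
   pullback condition on the decoration.  Hence a factorisation
   f : X -> Ybar of xi through ups : Y -> P provides, for every x, a unique
   isomorphism between xi(x) and the Y-tree f(x) decorated over P; these
   isomorphisms glue to the unique g : L -> Y over P with gbar . eta = f. *)

Lemma proj1_sig_inj (A : Type) (Pr : A -> Prop) (a b : sig Pr) :
  proj1_sig a = proj1_sig b -> a = b.
Proof. by case: a b => [a pa] [b pb] /= E; exact: subset_eq_compat. Qed.

Lemma rel_class_eq (T : Type) (E : T -> T -> Prop) a b :
  (forall x y, E x y -> E y x) -> (forall x y z, E x y -> E y z -> E x z) ->
  E a b -> E a = E b.
Proof.
move=> Esym Etrans Eab; apply: functional_extensionality => c.
apply: propositional_extensionality; split; first exact: Etrans (Esym _ _ Eab).
exact: Etrans.
Qed.

Lemma In_mem (T : eqType) (x : T) (s : seq T) : x \in s -> List.In x s.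
Proof. by elim: s => //= a s IH; rewrite in_cons => /orP [/eqP ->|/IH]; [left|right]. Qed.

Definition pmap_id (A : PolyEnd) : PMap A A := @PM A A id id id.

Lemma pmap_id_is_mor (A : PolyEnd) : is_mor (pmap_id A).
Proof.
split; [by []|split; [by []|split; [by []|]]].
move=> b e' He'; exists e'; split=> //.
by move=> e [_ <-].
Qed.

Definition mor_id (A : PolyEnd) : Mor A A := exist _ _ (pmap_id_is_mor A).

Lemma mor_inverse (A B : PolyEnd) (h : Mor A B) :
  bijective (f0 (proj1_sig h)) -> bijective (f2 (proj1_sig h)) ->
  bijective (f1 (proj1_sig h)) ->
  exists h' : Mor B A,
    [/\ cancel (f0 (proj1_sig h')) (f0 (proj1_sig h)),
        cancel (f2 (proj1_sig h')) (f2 (proj1_sig h)) &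
        cancel (f1 (proj1_sig h')) (f1 (proj1_sig h))] /\
    [/\ cancel (f0 (proj1_sig h)) (f0 (proj1_sig h')),
        cancel (f2 (proj1_sig h)) (f2 (proj1_sig h')) &
        cancel (f1 (proj1_sig h)) (f1 (proj1_sig h'))].
Proof.
case: h => [[h0 h2 h1] [hs [hp [ht _]]]] /= [g0 K0 K0'] [g2 K2 K2'] [g1 K1 K1'].
have M : is_mor (@PM B A g0 g2 g1).
  split; [|split; [|split]] => /=.
  - by move=> e; have := hs (g2 e); rewrite /= K2' => <-; rewrite K0.
  - by move=> e; have := hp (g2 e); rewrite /= K2' => <-; rewrite K1.
  - by move=> b; have := ht (g1 b); rewrite /= K1' => <-; rewrite K0.
  move=> b e' He'; exists (h2 e'); split.
    by split; [rewrite -hp /= He' K1'|rewrite K2].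
  by move=> e [_ <-]; rewrite K2'.
by exists (exist _ _ M).
Qed.

(** * Isomorphism classes of P-trees *)

Section PTreeIso.
Variable Q : PolyEnd.

Lemma ptree_iso_via_id (A : PTree Q) : @ptree_iso_via _ A A (mor_id _).
Proof. by do 3 (split; first by exists id). Qed.

Lemma ptree_iso_refl (A : PTree Q) : ptree_iso A A.
Proof. by exists (mor_id _); exact: ptree_iso_via_id. Qed.

Lemma ptree_iso_via_sym (A B : PTree Q) h : @ptree_iso_via _ A B h ->
  exists h', @ptree_iso_via _ B A h' /\
    cancel (f0 (proj1_sig h)) (f0 (proj1_sig h')).
Proof.
move=> [B0 [B2 [B1 [C0 [C2 C1]]]]].
have [h' [[K0' K2' K1'] [K0 K2 K1]]] := mor_inverse B0 B2 B1.
exists h'; split=> //; split; first exact: Bijective K0' K0.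
split; first exact: Bijective K2' K2.
split; first exact: Bijective K1' K1.
by split; [|split] => y /=; [rewrite -C0 /= K0'|rewrite -C2 /= K2'|rewrite -C1 /= K1'].
Qed.

Lemma ptree_iso_sym (A B : PTree Q) : ptree_iso A B -> ptree_iso B A.
Proof. by case=> h /ptree_iso_via_sym [h' [H _]]; exists h'. Qed.

Lemma ptree_iso_via_comp (A B C : PTree Q) h h' :
  @ptree_iso_via _ A B h -> @ptree_iso_via _ B C h' ->
  @ptree_iso_via _ A C (mor_comp h h').
Proof.
move=> [B0 [B2 [B1 [C0 [C2 C1]]]]] [B0' [B2' [B1' [C0' [C2' C1']]]]].
do 3 (split; first exact: bij_comp).
split; [|split] => y /=.
- by have /= -> := C0' (f0 (proj1_sig h) y); exact: C0.
- by have /= -> := C2' (f2 (proj1_sig h) y); exact: C2.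
- by have /= -> := C1' (f1 (proj1_sig h) y); exact: C1.
Qed.

Lemma ptree_iso_trans (A B C : PTree Q) :
  ptree_iso A B -> ptree_iso B C -> ptree_iso A C.
Proof. by case=> h H [h' H']; exists (mor_comp h h'); exact: ptree_iso_via_comp. Qed.

Lemma class_of_eq (A B : PTree Q) : ptree_iso A B -> class_of A = class_of B.
Proof.
move=> H; apply: proj1_sig_inj; apply: rel_class_eq H.
  exact: ptree_iso_sym.
exact: ptree_iso_trans.
Qed.

Lemma class_of_iso (A B : PTree Q) : class_of A = class_of B -> ptree_iso A B.
Proof. by move/(f_equal (@proj1_sig _ _)) => /= ->; exact: ptree_iso_refl. Qed.

Lemma class_of_rep (C : trP Q) : class_of (rep C) = C.
Proof.
apply: proj1_sig_inj; rewrite /rep.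
by case: (constructive_indefinite_description _ _).
Qed.

Lemma rep_iso (C : trP Q) (A : PTree Q) : C = class_of A -> ptree_iso (rep C) A.
Proof. by move=> E; apply: class_of_iso; rewrite class_of_rep. Qed.

Lemma mptree_iso_refl (M : MPTree Q) : mptree_iso M M.
Proof. by exists (mor_id _); split; first exact: ptree_iso_via_id. Qed.

Lemma mptree_iso_sym (M N : MPTree Q) : mptree_iso M N -> mptree_iso N M.
Proof.
case=> h [/ptree_iso_via_sym [h' [H K]] E]; exists h'; split=> //.
by rewrite -E K.
Qed.

Lemma mptree_iso_trans (M N O : MPTree Q) :
  mptree_iso M N -> mptree_iso N O -> mptree_iso M O.
Proof.
case=> h [H E] [h' [H' E']]; exists (mor_comp h h'); split.
  exact: ptree_iso_via_comp H H'.
by rewrite /= E E'.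
Qed.

Lemma mclass_of_eq (M N : MPTree Q) : mptree_iso M N -> mclass_of M = mclass_of N.
Proof.
move=> H; apply: proj1_sig_inj; apply: rel_class_eq H.
  exact: mptree_iso_sym.
exact: mptree_iso_trans.
Qed.

Lemma mclass_of_iso (M N : MPTree Q) : mclass_of M = mclass_of N -> mptree_iso M N.
Proof. by move/(f_equal (@proj1_sig _ _)) => /= ->; exact: mptree_iso_refl. Qed.

Lemma mclass_of_mrep (C : trmP Q) : mclass_of (mrep C) = C.
Proof.
apply: proj1_sig_inj; rewrite /mrep.
by case: (constructive_indefinite_description _ _).
Qed.

Lemma mrep_iso (C : trmP Q) (M : MPTree Q) : C = mclass_of M -> mptree_iso (mrep C) M.
Proof. by move=> E; apply: mclass_of_iso; rewrite mclass_of_mrep. Qed.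

Lemma forget_iso (M N : MPTree Q) : mptree_iso M N -> ptree_iso (forget M) (forget N).
Proof. by case=> h [H _]; exists h. Qed.

Lemma class_of_forget_mrep (M : MPTree Q) :
  class_of (forget (mrep (mclass_of M))) = class_of (forget M).
Proof. exact: class_of_eq (forget_iso (mrep_iso erefl)). Qed.

Lemma ptree_iso_via_root (A B : PTree Q) h : @ptree_iso_via _ A B h ->
  f0 (proj1_sig h) (troot (projT1 A)) = troot (projT1 B).
Proof.
move=> [B0 [[g2 _ K2'] _]]; have [hs _] := proj2_sig h.
have [//|/eqP/ts_onto [e He]] := eqVneq (f0 (proj1_sig h) (troot (projT1 A))) (troot (projT1 B)).
have := hs (g2 e); rewrite /= K2' He => /(bij_inj B0) E.
by case: (ts_root E).
Qed.

Lemma ptree_iso_via_leaf (A B : PTree Q) h l : @ptree_iso_via _ A B h ->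
  (forall b, tt b <> l) -> forall b, tt b <> f0 (proj1_sig h) l.
Proof.
move=> [B0 [_ [[g1 _ K1'] _]]] Hl b E; have [_ [_ [ht _]]] := proj2_sig h.
have := ht (g1 b); rewrite /= K1' E => /(bij_inj B0) E'.
exact: Hl _ E'.
Qed.

Lemma root_dec_iso (A B : PTree Q) : ptree_iso A B -> root_dec A = root_dec B.
Proof.
case=> h H; rewrite /root_dec -(ptree_iso_via_root H).
by case: H => [_ [_ [_ [C0 _]]]]; rewrite -C0.
Qed.

Lemma leaf_dec_iso (M N : MPTree Q) : mptree_iso M N -> leaf_dec M = leaf_dec N.
Proof.
case=> h [[_ [_ [_ [C0 _]]]] E].
by rewrite /leaf_dec -E -C0.
Qed.

Lemma root_dec_rep_class (A : PTree Q) : root_dec (rep (class_of A)) = root_dec A.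
Proof. exact: root_dec_iso (rep_iso erefl). Qed.

Lemma leaf_dec_mrep_mclass (M : MPTree Q) : leaf_dec (mrep (mclass_of M)) = leaf_dec M.
Proof. exact: leaf_dec_iso (mrep_iso erefl). Qed.

Lemma ptree_iso_via_dec_ext (T : Tree) (d d' : Mor (tree_pe T) Q) (B : PTree Q) h :
  pmap_eq (proj1_sig d) (proj1_sig d') ->
  @ptree_iso_via Q (existT _ T d) B h -> @ptree_iso_via Q (existT _ T d') B h.
Proof.
move=> [E0 [E2 E1]] [B0 [B2 [B1 [C0 [C2 C1]]]]]; do 3 (split=> //).
by split; [|split] => a /=; [rewrite -E0 -C0|rewrite -E2 -C2|rewrite -E1 -C1].
Qed.

Section Decorate.
Variables (Q' : PolyEnd) (a : Mor Q Q').

Lemma ptree_comp_iso_via (A B : PTree Q) h : @ptree_iso_via _ A B h ->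
  @ptree_iso_via _ (ptree_comp A a) (ptree_comp B a) h.
Proof.
move=> [B0 [B2 [B1 [C0 [C2 C1]]]]]; do 3 (split=> //).
by split; [|split] => y /=; [rewrite -C0|rewrite -C2|rewrite -C1].
Qed.

Lemma ptree_comp_iso (A B : PTree Q) :
  ptree_iso A B -> ptree_iso (ptree_comp A a) (ptree_comp B a).
Proof. by case=> h H; exists h; exact: ptree_comp_iso_via. Qed.

Lemma mptree_comp_iso (M N : MPTree Q) :
  mptree_iso M N -> mptree_iso (mptree_comp M a) (mptree_comp N a).
Proof. by case=> h [H E]; exists h; split; first exact: ptree_comp_iso_via. Qed.

End Decorate.

(** * Rigidity of P-trees *)

Lemma tree_mor_unique (T B : Tree) (d : Mor (tree_pe B) Q)
    (h h' : Mor (tree_pe T) (tree_pe B)) :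
  pmap_eq (pmap_comp (proj1_sig h) (proj1_sig d))
          (pmap_comp (proj1_sig h') (proj1_sig d)) ->
  f0 (proj1_sig h) (troot T) = f0 (proj1_sig h') (troot T) ->
  pmap_eq (proj1_sig h) (proj1_sig h').
Proof.
case: h => [[h0 h2 h1] /= [hs [hp [ht _]]]].
case: h' => [[h0' h2' h1'] /= [hs' [hp' [ht' _]]]].
have [_ [dp [_ dpb]]] := proj2_sig d; rewrite /pmap_eq /=; simpl in *.
move=> [_ [Ed2 _]] Eroot.
have node b : h0 (tt b) = h0' (tt b) -> h1 b = h1' b by rewrite ht ht' => /tt_inj.
have inner e : h1 (tp e) = h1' (tp e) -> h2 e = h2' e.
  move=> E; have He : pep (f2 (proj1_sig d) (h2 e)) = f1 (proj1_sig d) (h1 (tp e)).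
    by rewrite -dp -hp.
  have [e0 [_ U]] := dpb _ _ He.
  by rewrite -(U (h2 e)) ?hp //; apply: U; rewrite -hp' -E Ed2.
have edge k x : iter k (tsigma (@ts T) (@tp T) (@tt T)) x = troot T -> h0 x = h0' x.
  elim: k x => [|k IH] x; first by move=> /= ->.
  rewrite iterSr => /IH; rewrite /tsigma.
  case: pickP => [e /eqP <-|_] // H.
  by rewrite hs hs' (inner _ (node _ H)).
have edges x : h0 x = h0' x by have [k /edge] := ttree x.
by split=> //; split=> [e|b]; [exact: inner (node _ (edges _))|exact: node].
Qed.

Lemma ptree_iso_via_unique (A B : PTree Q) h h' :
  @ptree_iso_via _ A B h -> @ptree_iso_via _ A B h' ->
  pmap_eq (proj1_sig h) (proj1_sig h').
Proof.
move=> Hh Hh'; apply: (tree_mor_unique (d := projT2 B)); last first.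
  by rewrite (ptree_iso_via_root Hh) (ptree_iso_via_root Hh').
move: Hh Hh' => [_ [_ [_ [C0 [C2 C1]]]]] [_ [_ [_ [C0' [C2' C1']]]]].
by split; [|split] => y; [rewrite C0 C0'|rewrite C2 C2'|rewrite C1 C1'].
Qed.

End PTreeIso.

(** * Quotients by the equivalence generated by a relation *)

Section Quotient.
Variables (T : Type) (rel : T -> T -> Prop).

Definition qequiv := clos_refl_sym_trans T rel.
Definition quot := {C : T -> Prop | exists r, C = qequiv r}.
Definition qcls (r : T) : quot := exist _ (qequiv r) (ex_intro _ r erefl).

Lemma qcls_rel r r' : rel r r' -> qcls r' = qcls r.
Proof.
move=> H; apply: proj1_sig_inj; apply: rel_class_eq (rst_sym _ _ _ _ (rst_step _ _ _ _ H)).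
  exact: rst_sym.
exact: rst_trans.
Qed.

Lemma qcls_surj (C : quot) : exists r, C = qcls r.
Proof. by case: C => C [r E]; exists r; exact: proj1_sig_inj. Qed.

Definition qlift (Z : Type) (G : T -> Z) (C : quot) : Z :=
  G (proj1_sig (constructive_indefinite_description _ (proj2_sig C))).

Lemma qlift_cls (Z : Type) (G : T -> Z) (HG : forall r r', rel r r' -> G r = G r') r :
  qlift G (qcls r) = G r.
Proof.
rewrite /qlift; case: (constructive_indefinite_description _ _) => r0 /= E.
have : qequiv r0 r by rewrite -E; exact: rst_refl.
by elim=> [a b /HG|a|a b _ ->|a b c _ -> _ ->].
Qed.

End Quotient.

(** * The glued polynomial endofunctor *)

Section Construction.
Variables (P X : PolyEnd) (xi : Mor X (Fbar P)).
Local Notation xm := (proj1_sig xi).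

Definition xtree (x : pe1 X) : PTree P := rep (f1 xm x).
Definition xshape (x : pe1 X) : Tree := projT1 (xtree x).
Definition xdec (x : pe1 X) : Mor (tree_pe (xshape x)) P := projT2 (xtree x).

Lemma mrep_xi_iso e : ptree_iso (forget (mrep (f2 xm e))) (xtree (pep e)).
Proof.
have [_ [hp _]] := proj2_sig xi.
by apply: ptree_iso_sym; rewrite /xtree (hp e) /=; exact: rep_iso.
Qed.

Definition mrep_xi_iso_via e :=
  proj1_sig (constructive_indefinite_description _ (mrep_xi_iso e)).

Lemma mrep_xi_iso_viaP e : @ptree_iso_via _ _ _ (mrep_xi_iso_via e).
Proof. exact: proj2_sig (constructive_indefinite_description _ (mrep_xi_iso e)). Qed.

(* The leaf of xtree (pep e) marked by xi(e). *)
Definition xleaf e : 'I_(tn0 (xshape (pep e))) :=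
  f0 (proj1_sig (mrep_xi_iso_via e)) (proj1_sig (projT2 (mrep (f2 xm e)))).

Lemma xleaf_leaf e : forall b, tt b <> xleaf e.
Proof. exact: ptree_iso_via_leaf (mrep_xi_iso_viaP e) (proj2_sig (projT2 (mrep _))). Qed.

Definition pre_edge := (pe0 X + {x : pe1 X & 'I_(tn0 (xshape x))})%type.

Inductive glue : pre_edge -> pre_edge -> Prop :=
| glue_root x : glue (inr (existT _ x (troot (xshape x)))) (inl (pet x))
| glue_leaf e : glue (inr (existT _ (pep e) (xleaf e))) (inl (pes e)).

Definition L : PolyEnd :=
  @PE (quot glue) {x : pe1 X & 'I_(tn2 (xshape x))} {x : pe1 X & 'I_(tn1 (xshape x))}
    (fun z => qcls glue (inr (existT _ (projT1 z) (ts (projT2 z)))))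
    (fun z => existT _ (projT1 z) (tp (projT2 z)))
    (fun z => qcls glue (inr (existT _ (projT1 z) (tt (projT2 z))))).

Lemma finfib_L : finfib L.
Proof.
case=> x n; exists [seq existT (fun x => 'I_(tn2 (xshape x))) x e | e <- enum 'I_(tn2 (xshape x))].
case=> x' e /= E; have /= Ex := f_equal (@projT1 _ _) E; subst x'.
by apply: List.in_map; apply: In_mem; exact: mem_enum.
Qed.

Definition lam_edge (r : pre_edge) : pe0 P :=
  match r with
  | inl y => f0 xm y
  | inr z => f0 (proj1_sig (xdec (projT1 z))) (projT2 z)
  end.

Lemma lam_edge_glue r r' : glue r r' -> lam_edge r = lam_edge r'.
Proof.
have [hs [_ [ht _]]] := proj2_sig xi.
case=> [x|e] /=; first by rewrite ht.
have [_ [_ [_ [C0 _]]]] := mrep_xi_iso_viaP e.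
by rewrite hs /= /leaf_dec -C0.
Qed.

Definition lam_pmap : PMap L P :=
  @PM L P (qlift lam_edge) (fun z => f2 (proj1_sig (xdec (projT1 z))) (projT2 z))
                           (fun z => f1 (proj1_sig (xdec (projT1 z))) (projT2 z)).

Lemma lam_is_mor : is_mor lam_pmap.
Proof.
split; [|split; [|split]].
- case=> x e /=; rewrite qlift_cls; last exact: lam_edge_glue.
  by have [ds _] := proj2_sig (xdec x); rewrite /= ds.
- by case=> x e /=; have [_ [dp _]] := proj2_sig (xdec x); rewrite /= dp.
- case=> x n /=; rewrite qlift_cls; last exact: lam_edge_glue.
  by have [_ [_ [dt _]]] := proj2_sig (xdec x); rewrite /= dt.
case=> x n e' /= He'; have [_ [_ [_ dpb]]] := proj2_sig (xdec x).
have [e0 [[He0 He0'] U]] := dpb _ _ He'.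
exists (existT _ x e0); split; first by split=> //; exact: (f_equal (existT _ x) He0).
case=> x' e [/= E E']; have /= Ex := f_equal (@projT1 _ _) E; subst x'.
by rewrite (U e) //; split=> //; exact: inj_pair2 E.
Qed.

Definition lam : Mor L P := exist _ _ lam_is_mor.

Definition xtree_incl (x : pe1 X) : PMap (tree_pe (xshape x)) L :=
  @PM (tree_pe (xshape x)) L (fun a => qcls glue (inr (existT _ x a)))
     (fun e => existT (fun x => 'I_(tn2 (xshape x))) x e)
     (fun n => existT (fun x => 'I_(tn1 (xshape x))) x n).

Lemma xtree_incl_is_mor x : is_mor (xtree_incl x).
Proof.
do 3 (split=> //); move=> n [x' e] /= E.
have /= Ex := f_equal (@projT1 _ _) E; subst x'.
exists e; split; first by split=> //; exact: inj_pair2 E.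
by move=> e' [_ /= E']; rewrite (inj_pair2 _ _ _ _ _ E').
Qed.

Definition ltree (x : pe1 X) : PTree L :=
  existT _ (xshape x) (exist _ _ (xtree_incl_is_mor x)).

Definition ltree_marked x (l : 'I_(tn0 (xshape x))) (lp : forall b, tt b <> l) : MPTree L :=
  existT _ (ltree x) (exist _ l lp).
Definition xtree_marked x (l : 'I_(tn0 (xshape x))) (lp : forall b, tt b <> l) : MPTree P :=
  existT _ (xtree x) (exist _ l lp).

Definition eta_pmap : PMap X (Fbar L) :=
  @PM X (Fbar L) (fun y => qcls glue (inl y))
    (fun e => mclass_of (ltree_marked (@xleaf_leaf e))) (fun x => class_of (ltree x)).

Lemma xi_marked_eq e l lp :
  f2 xm e = mclass_of (@xtree_marked (pep e) l lp) <-> l = xleaf e.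
Proof.
split=> [H|E].
- have [h [Hh /= <-]] := mrep_iso H.
  by have [-> _] := ptree_iso_via_unique Hh (mrep_xi_iso_viaP e).
- subst l; rewrite -(mclass_of_mrep (f2 xm e)); apply: mclass_of_eq.
  by exists (mrep_xi_iso_via e); split; first exact: mrep_xi_iso_viaP.
Qed.

Lemma eta_marked_eq e l lp :
  f2 eta_pmap e = mclass_of (@ltree_marked (pep e) l lp) <-> l = xleaf e.
Proof.
split=> [H|E].
- have [h [Hh /= <-]] := mclass_of_iso H.
  by have [-> _] := ptree_iso_via_unique Hh (ptree_iso_via_id (ltree (pep e))).
- subst l; congr mclass_of; congr existT; congr exist.
  exact: proof_irrelevance.
Qed.

Lemma xi_eta_marked x e l lp : pep e = x ->
  f2 xm e = mclass_of (@xtree_marked x l lp) <->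
  f2 eta_pmap e = mclass_of (@ltree_marked x l lp).
Proof. by move=> E; subst x; rewrite xi_marked_eq eta_marked_eq. Qed.

Lemma eta_is_mor : is_mor eta_pmap.
Proof.
split; [|split; [|split]].
- move=> e /=; rewrite leaf_dec_mrep_mclass /leaf_dec /=.
  exact: qcls_rel (glue_leaf e).
- by move=> e /=; rewrite class_of_forget_mrep.
- move=> x /=; rewrite root_dec_rep_class /root_dec /=.
  exact: qcls_rel (glue_root x).
move=> x c /= /class_of_iso [k Hk].
pose l := f0 (proj1_sig k) (proj1_sig (projT2 (mrep c))).
have lp : forall b, tt b <> l := ptree_iso_via_leaf Hk (proj2_sig (projT2 (mrep c))).
have -> : c = mclass_of (@ltree_marked x l lp).
  by rewrite -(mclass_of_mrep c); apply: mclass_of_eq; exists k.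
have Hp : @pep (Fbar P) (mclass_of (@xtree_marked x l lp)) = f1 xm x.
  by rewrite /= class_of_forget_mrep /= /xtree class_of_rep.
have [_ [_ [_ xpb]]] := proj2_sig xi.
have [e [[He1 He2] U]] := xpb _ _ Hp.
exists e; split; first by split=> //; rewrite -xi_eta_marked.
by move=> e' [He' He'2]; apply: U; rewrite xi_eta_marked.
Qed.

Definition eta : Mor X (Fbar L) := exist _ _ eta_is_mor.

Lemma ltree_lam_iso_via x :
  @ptree_iso_via P (ptree_comp (ltree x) lam) (xtree x) (mor_id (tree_pe (xshape x))).
Proof.
do 3 (split; first by exists id).
split; [|split] => // a /=.
by rewrite qlift_cls //; exact: lam_edge_glue.
Qed.

Lemma eta_lam : pmap_eq (pmap_comp (proj1_sig eta) (Fbar_map lam)) xm.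
Proof.
split; [|split].
- by move=> y /=; rewrite qlift_cls //; exact: lam_edge_glue.
- move=> e /=; rewrite (proj2 (xi_marked_eq (@xleaf_leaf e)) erefl).
  apply: mclass_of_eq; apply: mptree_iso_trans (mptree_comp_iso lam (mrep_iso erefl)) _.
  by exists (mor_id _); split; first exact: ltree_lam_iso_via.
- move=> x /=; rewrite -[RHS]class_of_rep; apply: class_of_eq.
  apply: ptree_iso_trans (ptree_comp_iso lam (rep_iso erefl)) _.
  by exists (mor_id _); exact: ltree_lam_iso_via.
Qed.

(** * The universal property *)

Section Universal.
Variables (Y : PolyEnd) (ups : Mor Y P) (f : Mor X (Fbar Y)).
Hypothesis hf : pmap_eq (pmap_comp (proj1_sig f) (Fbar_map ups)) xm.
Local Notation fm := (proj1_sig f).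

Definition ftree (x : pe1 X) : PTree Y := rep (f1 fm x).
Definition fdec (x : pe1 X) : Mor (tree_pe (projT1 (ftree x))) Y := projT2 (ftree x).

Lemma xtree_ftree_iso x : ptree_iso (xtree x) (ptree_comp (ftree x) ups).
Proof. by have [_ [_ h1]] := hf; rewrite /xtree -(h1 x) /=; exact: rep_iso. Qed.

Definition xtree_ftree x :=
  proj1_sig (constructive_indefinite_description _ (xtree_ftree_iso x)).

Lemma xtree_ftreeP x : @ptree_iso_via _ _ _ (xtree_ftree x).
Proof. exact: proj2_sig (constructive_indefinite_description _ (xtree_ftree_iso x)). Qed.

Definition g_edge (r : pre_edge) : pe0 Y :=
  match r with
  | inl y => f0 fm y
  | inr z => f0 (proj1_sig (fdec (projT1 z)))
                (f0 (proj1_sig (xtree_ftree (projT1 z))) (projT2 z))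
  end.

(* The isomorphism xtree_ftree carries the leaf marked by xi(e) to the leaf
   marked by f(e), by rigidity. *)
Lemma xtree_ftree_leaf e : exists q,
  @ptree_iso_via Y (forget (mrep (f2 fm e))) (ftree (pep e)) q /\
  f0 (proj1_sig q) (proj1_sig (projT2 (mrep (f2 fm e)))) =
  f0 (proj1_sig (xtree_ftree (pep e))) (xleaf e).
Proof.
have [_ [fp _]] := proj2_sig f; have [_ [h2 _]] := hf.
have [q Hq] : ptree_iso (forget (mrep (f2 fm e))) (ftree (pep e)).
  by apply: ptree_iso_sym; rewrite /ftree (fp e) /=; exact: rep_iso.
exists q; split=> //.
have [r [Hr Er]] : mptree_iso (mptree_comp (mrep (f2 fm e)) ups) (mrep (f2 xm e)).
  by apply: mclass_of_iso; rewrite mclass_of_mrep -(h2 e).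
have Hc := ptree_iso_via_comp (ptree_iso_via_comp Hr (mrep_xi_iso_viaP e))
                              (xtree_ftreeP (pep e)).
have [-> _] := ptree_iso_via_unique (ptree_comp_iso_via ups Hq) Hc.
by rewrite /= Er.
Qed.

Lemma g_edge_glue r r' : glue r r' -> g_edge r = g_edge r'.
Proof.
have [fs [_ [ft _]]] := proj2_sig f.
case=> [x|e] /=; first by rewrite (ptree_iso_via_root (xtree_ftreeP x)) ft.
have [q [[_ [_ [_ [C0 _]]]] <-]] := xtree_ftree_leaf e.
by rewrite fs /= /leaf_dec -C0.
Qed.

Definition g_pmap : PMap L Y :=
  @PM L Y (qlift g_edge)
    (fun z => f2 (proj1_sig (fdec (projT1 z))) (f2 (proj1_sig (xtree_ftree (projT1 z))) (projT2 z)))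
    (fun z => f1 (proj1_sig (fdec (projT1 z))) (f1 (proj1_sig (xtree_ftree (projT1 z))) (projT2 z))).

Lemma g_is_mor : is_mor g_pmap.
Proof.
split; [|split; [|split]].
- case=> x e /=; rewrite qlift_cls; last exact: g_edge_glue.
  have [js _] := proj2_sig (xtree_ftree x); have [us _] := proj2_sig (fdec x).
  by rewrite /= js us.
- case=> x e /=.
  have [_ [jp _]] := proj2_sig (xtree_ftree x); have [_ [up _]] := proj2_sig (fdec x).
  by rewrite /= jp up.
- case=> x n /=; rewrite qlift_cls; last exact: g_edge_glue.
  have [_ [_ [jt _]]] := proj2_sig (xtree_ftree x).
  have [_ [_ [ut _]]] := proj2_sig (fdec x).
  by rewrite /= jt ut.
case=> x n e' /= He'.
have [_ [jp [_ jpb]]] := proj2_sig (xtree_ftree x).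
have [_ [_ [_ upb]]] := proj2_sig (fdec x).
have [e0 [[He0 He0'] U0]] := upb _ _ He'.
have [e1 [[He1 He1'] U1]] := jpb _ _ He0.
exists (existT _ x e1); split; first by split; [exact: (f_equal (existT _ x) He1)|rewrite /= He1'].
case=> x' e [/= E E']; have /= Ex := f_equal (@projT1 _ _) E; subst x'.
have Etp := inj_pair2 _ _ _ _ _ E.
have E0 : f2 (proj1_sig (xtree_ftree x)) e = e0.
  by symmetry; apply: U0; split=> //; rewrite -jp /= Etp.
by rewrite (U1 e).
Qed.

Definition g : Mor L Y := exist _ _ g_is_mor.

Lemma g_ups : pmap_eq (pmap_comp (proj1_sig g) (proj1_sig ups)) (proj1_sig lam).
Proof.
have [h0 _] := hf.
split; [|split].
- move=> C; have [r ->] := qcls_surj C.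
  rewrite /= !qlift_cls; [|exact: lam_edge_glue|exact: g_edge_glue].
  case: r => [y|[x a]] /=; first exact: h0.
  by have [_ [_ [_ [C0 _]]]] := xtree_ftreeP x; have := C0 a.
- by case=> x e /=; have [_ [_ [_ [_ [C2 _]]]]] := xtree_ftreeP x; have := C2 e.
- by case=> x n /=; have [_ [_ [_ [_ [_ C1]]]]] := xtree_ftreeP x; have := C1 n.
Qed.

Lemma ltree_g_iso_via x :
  @ptree_iso_via Y (ptree_comp (ltree x) g) (ftree x) (xtree_ftree x).
Proof.
have [B0 [B2 [B1 _]]] := xtree_ftreeP x; do 3 (split=> //).
split; [|split] => // a /=.
by rewrite qlift_cls //; exact: g_edge_glue.
Qed.

Lemma eta_g : pmap_eq (pmap_comp (proj1_sig eta) (Fbar_map g)) fm.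
Proof.
split; [|split].
- by move=> y /=; rewrite qlift_cls //; exact: g_edge_glue.
- move=> e /=; have [q [Hq Eq]] := xtree_ftree_leaf e.
  pose MC : MPTree Y := existT _ (ftree (pep e))
    (exist _ _ (ptree_iso_via_leaf Hq (proj2_sig (projT2 (mrep (f2 fm e)))))).
  rewrite -[RHS]mclass_of_mrep; apply: mclass_of_eq.
  apply: mptree_iso_trans (mptree_comp_iso g (mrep_iso erefl)) _.
  apply: (@mptree_iso_trans _ _ MC).
    by exists (xtree_ftree (pep e)); split; [exact: ltree_g_iso_via|rewrite /= -Eq].
  by apply: mptree_iso_sym; exists q.
- move=> x /=; rewrite -[RHS]class_of_rep; apply: class_of_eq.
  apply: ptree_iso_trans (ptree_comp_iso g (rep_iso erefl)) _.
  by exists (xtree_ftree x); exact: ltree_g_iso_via.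
Qed.

Section Uniqueness.
Variable g' : Mor L Y.
Hypotheses (g'_ups : pmap_eq (pmap_comp (proj1_sig g') (proj1_sig ups)) (proj1_sig lam))
           (eta_g' : pmap_eq (pmap_comp (proj1_sig eta) (Fbar_map g')) fm).

(* On the tree of x, g' is an isomorphism onto f(x) over P; by rigidity it is
   xtree_ftree x. *)
Lemma ltree_g'_iso_via x : exists w,
  @ptree_iso_via Y (ptree_comp (ltree x) g') (ftree x) w /\
  pmap_eq (proj1_sig w) (proj1_sig (xtree_ftree x)).
Proof.
have [E0 [E2 E1]] := g'_ups; have [_ [_ F1]] := eta_g'.
have [w Hw] : ptree_iso (ptree_comp (ltree x) g') (ftree x).
  apply: class_of_iso; rewrite /ftree class_of_rep -(F1 x) /=.
  by apply: class_of_eq; apply: ptree_iso_sym; apply: ptree_comp_iso; exact: rep_iso.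
exists w; split=> //; apply: ptree_iso_via_unique (xtree_ftreeP x).
apply: ptree_iso_via_dec_ext (ptree_comp_iso_via ups Hw).
split; [|split] => a /=.
- have /= -> := E0 (qcls glue (inr (existT _ x a))).
  by rewrite qlift_cls //; exact: lam_edge_glue.
- exact: E2 (existT _ x a).
- exact: E1 (existT _ x a).
Qed.

Lemma g_unique : pmap_eq (proj1_sig g') (proj1_sig g).
Proof.
have [F0 _] := eta_g'.
split; [|split].
- move=> C; have [r ->] := qcls_surj C; rewrite /= qlift_cls //; last exact: g_edge_glue.
  case: r => [y|[x a]] /=; first exact: F0.
  have [w [[_ [_ [_ [C0 _]]]] [W0 _]]] := ltree_g'_iso_via x.
  by have := C0 a => /= <-; rewrite W0.
- case=> x e /=; have [w [[_ [_ [_ [_ [C2 _]]]]] [_ [W2 _]]]] := ltree_g'_iso_via x.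
  by have := C2 e => /= <-; rewrite W2.
- case=> x n /=; have [w [[_ [_ [_ [_ [_ C1]]]]] [_ [_ W1]]]] := ltree_g'_iso_via x.
  by have := C1 n => /= <-; rewrite W1.
Qed.

End Uniqueness.
End Universal.
End Construction.

Theorem mainTheorem16 (P : PolyEnd) (hP : finfib P) :
  forall (X : PolyEnd) (xi : Mor X (Fbar P)), finfib X ->
  exists (L : PolyEnd) (lam : Mor L P) (eta : Mor X (Fbar L)),
    finfib L /\
    pmap_eq (pmap_comp (proj1_sig eta) (Fbar_map lam)) (proj1_sig xi) /\
    forall (Y : PolyEnd) (ups : Mor Y P) (f : Mor X (Fbar Y)), finfib Y ->
      pmap_eq (pmap_comp (proj1_sig f) (Fbar_map ups)) (proj1_sig xi) ->
      exists g : Mor L Y,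
        (pmap_eq (pmap_comp (proj1_sig g) (proj1_sig ups)) (proj1_sig lam) /\
         pmap_eq (pmap_comp (proj1_sig eta) (Fbar_map g)) (proj1_sig f)) /\
        forall g' : Mor L Y,
          pmap_eq (pmap_comp (proj1_sig g') (proj1_sig ups)) (proj1_sig lam) ->
          pmap_eq (pmap_comp (proj1_sig eta) (Fbar_map g')) (proj1_sig f) ->
          pmap_eq (proj1_sig g') (proj1_sig g).
Proof.
move=> X xi _; exists (L xi), (lam xi), (eta xi).
split; first exact: finfib_L.
split; first exact: eta_lam.
move=> Y ups f _ hf; exists (g hf); split; first by split; [exact: g_ups|exact: eta_g].
by move=> g'; exact: g_unique.
Qed.
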